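(* Let $\Phi$ be a real, additive gain graph on $V=\{1,\dots,n\}$ and suppose $\mathbf{Q}=(Q_1,\dots,Q_n)\in(\mathbb{E}^d)^n$ has ideal general position. Let $s$ be a flat of $\mathcal{H}(\Phi;\mathbf{Q})$ that is not a point. Then for $i,j\in V$, $\mathrm{proj}_s Q_i=\mathrm{proj}_s Q_j$ if and only if $i$ and $j$ lie in the same connected component of $(V,E(s))$.
   Context: A real, additive gain graph $\Phi$ on $V$: finite graph with edge set $E$ (multiple edges allowed, every edge with two distinct endpoints) and gains $\phi(e;i,j)\in\mathbb{R}$ with $\phi(e;j,i)=-\phi(e;i,j)$. With $\psi_{ij}(P)=d(P,Q_i)^2-d(P,Q_j)^2$, $\mathcal{H}(\Phi;\mathbf{Q})$ consists of hyperplanes $h(e)=\{P:\psi_{ij}(P)=\phi(e;i,j)\}$ for edges $e$ with endpoints $i,j$. A flat of $\mathcal{H}$ is a nonempty intersection of a subset of $\mathcal{H}$; $E(s)=\{e\in E:h(e)\supseteq s\}$. $\mathrm{proj}_s P$ is the orthogonal projection of $P$ onto $s$. Ideal general position: the points are distinct and, with $\mathbb{E}^d\subset\mathbb{P}^d$, $h_\infty$ the ideal hyperplane and $p_{ij}$ the ideal point of line $Q_iQ_j$, for every set $T$ of unordered pairs the projective span of $\{p_{ij}:\{i,j\}\in T\}$ has dimension $\min(n-c(T),d)-1$, where $c(T)$ is the number of components of $(\{1,\dots,n\},T)$, isolated vertices included. *)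

From HB Require Import structures.
From mathcomp Require Import all_boot all_order all_algebra.
From mathcomp Require Import boolp classical_sets reals.
From Stdlib Require Import ClassicalEpsilon.
Set Implicit Arguments. Unset Strict Implicit. Unset Printing Implicit Defensive.
Import Order.TTheory GRing.Theory Num.Theory.
Local Open Scope ring_scope.

Section Defs.
Variable R : realType.

Definition dotp (d : nat) (u v : 'rV[R]_d) : R := \sum_(k < d) u ord0 k * v ord0 k.
Definition dist2 (d : nat) (P X : 'rV[R]_d) : R := dotp (P - X) (P - X).

(* A real additive gain graph on V = 'I_n: a finite edge type E (multiple edges
   allowed), each edge e oriented from [src e] to [tgt e] (distinct), with gain
   phi(e; src e, tgt e) = gain e, hence phi(e; tgt e, src e) = - gain e. *)
Definition phi (n : nat) (E : finType) (src tgt : E -> 'I_n) (gain : E -> R)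
  (e : E) (i j : 'I_n) : R :=
  if (i == src e) && (j == tgt e) then gain e else - gain e.

Definition psi (n d : nat) (Q : 'I_n -> 'rV[R]_d) (i j : 'I_n) (P : 'rV[R]_d) : R :=
  dist2 P (Q i) - dist2 P (Q j).

Definition hyp (n d : nat) (E : finType) (src tgt : E -> 'I_n) (gain : E -> R)
  (Q : 'I_n -> 'rV[R]_d) (e : E) : set 'rV[R]_d :=
  fun P => psi Q (src e) (tgt e) P = phi src tgt gain e (src e) (tgt e).

Definition is_flat (n d : nat) (E : finType) (src tgt : E -> 'I_n) (gain : E -> R)
  (Q : 'I_n -> 'rV[R]_d) (s : set 'rV[R]_d) : Prop :=
  (exists S : {set E}, s = (fun P => forall e, e \in S -> hyp src tgt gain Q e P))
  /\ (exists P, s P).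

Definition is_point (d : nat) (s : set 'rV[R]_d) : Prop := exists P, s = (fun X => X = P).

Definition Es (n d : nat) (E : finType) (src tgt : E -> 'I_n) (gain : E -> R)
  (Q : 'I_n -> 'rV[R]_d) (s : set 'rV[R]_d) : {set E} :=
  [set e | `[< forall P, s P -> hyp src tgt gain Q e P >]].

Definition edge_rel (n : nat) (E : finType) (src tgt : E -> 'I_n) (F : {set E}) : rel 'I_n :=
  fun i j => [exists e in F, ((src e == i) && (tgt e == j)) || ((src e == j) && (tgt e == i))].

Definition is_proj (d : nat) (s : set 'rV[R]_d) (P X : 'rV[R]_d) : Prop :=
  s X /\ forall Y Z, s Y -> s Z -> dotp (P - X) (Y - Z) = 0.

Definition proj (d : nat) (s : set 'rV[R]_d) (P : 'rV[R]_d) : 'rV[R]_d :=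
  epsilon (inhabits 0) (is_proj s P).

(* The ideal point p_ij of line Q_iQ_j is the direction
   [Q_i - Q_j]; the projective span of a set of ideal points has dimension
   (dim of the linear span of the directions) - 1.  Unordered pairs {i,j} are
   represented by ordered pairs (i, j) with i < j. *)
Definition pair_rel (n : nat) (T : {set 'I_n * 'I_n}) : rel 'I_n :=
  fun i j => ((i, j) \in T) || ((j, i) \in T).

Definition ncomp (n : nat) (T : {set 'I_n * 'I_n}) : nat :=
  n_comp (pair_rel T) 'I_n.

Definition ideal_span_dim (n d : nat) (Q : 'I_n -> 'rV[R]_d) (T : {set 'I_n * 'I_n}) : int :=
  (\rank (\sum_(p in T) <<Q p.1 - Q p.2>>)%MS)%:Z - 1.

Definition ideal_general_position (n d : nat) (Q : 'I_n -> 'rV[R]_d) : Prop :=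
  injective Q /\
  forall T : {set 'I_n * 'I_n}, (forall p, p \in T -> (p.1 < p.2)%N) ->
    ideal_span_dim Q T = (minn (n - ncomp T) d)%:Z - 1.

End Defs.

(* Each hyperplane h(e) is a level set of P |-> -2 <P, Q_src - Q_tgt>, so a flat s
   through P0 is P0 + M^perp, where M is the span of the directions Q_a - Q_b over
   the edges of E(s); hence proj_s Q_i = proj_s Q_j iff Q_i - Q_j lies in M.  If i
   and j are connected in (V, E(s)) this follows by telescoping.  Otherwise adding
   the pair {i, j} to E(s) keeps the span M but lowers the number of components,
   which ideal general position only allows when M is everything, i.e. when s is
   a point. *)

From Pilot Require Import Defs.
From HB Require Import structures.
From mathcomp Require Import all_boot all_order all_algebra.
From mathcomp Require Import boolp classical_sets reals.
From mathcomp Require Import ring zify.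
From Stdlib Require Import ClassicalEpsilon.
Set Implicit Arguments. Unset Strict Implicit. Unset Printing Implicit Defensive.
Import Order.TTheory GRing.Theory Num.Theory.
Local Open Scope ring_scope.

Lemma subrBB (V : zmodType) (x y z : V) : (x - z) - (y - z) = x - y.
Proof. by rewrite opprB subrKA. Qed.

Section DotProduct.
Variables (R : realType) (d : nat).
Implicit Types u v w : 'rV[R]_d.

Lemma dotpC u v : dotp u v = dotp v u.
Proof. by apply: eq_bigr => k _; rewrite mulrC. Qed.

Lemma dotpDl u v w : dotp (u + v) w = dotp u w + dotp v w.
Proof. by rewrite /dotp -big_split; apply: eq_bigr => k _; rewrite !mxE mulrDl. Qed.

Lemma dotpNl u w : dotp (- u) w = - dotp u w.
Proof. by rewrite /dotp -sumrN; apply: eq_bigr => k _; rewrite !mxE mulNr. Qed.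

Lemma dotpBl u v w : dotp (u - v) w = dotp u w - dotp v w.
Proof. by rewrite dotpDl dotpNl. Qed.

Lemma dotpBr u v w : dotp w (u - v) = dotp w u - dotp w v.
Proof. by rewrite dotpC dotpBl !(dotpC w). Qed.

Lemma dotpNr u w : dotp w (- u) = - dotp w u.
Proof. by rewrite dotpC dotpNl dotpC. Qed.

Lemma mulmx_tr_eq0_dotp u v : (u *m v^T == 0) = (dotp u v == 0).
Proof.
have -> : dotp u v = (u *m v^T) 0 0 by rewrite !mxE; apply: eq_bigr => k _; rewrite !mxE.
by apply/eqP/eqP => [-> | uv0]; [rewrite mxE | apply/rowP => k; rewrite ord1 uv0 mxE].
Qed.

Lemma dotp_self_eq0 u : dotp u u = 0 -> u = 0.
Proof.
move=> /eqP; rewrite /dotp psumr_eq0 => [/allP uu0|k _]; last by rewrite -expr2 sqr_ge0.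
apply/rowP => k; rewrite mxE; apply/eqP.
by rewrite -(orbb (_ == 0)) -mulf_eq0 (implyP (uu0 k _)) ?mem_index_enum.
Qed.

Lemma mulmx_trmx_eq0 m (B : 'M[R]_(m, d)) : B *m B^T = 0 -> B = 0.
Proof.
move=> BB0; apply/row_matrixP => k; rewrite row0; apply: dotp_self_eq0.
have := congr1 (fun A : 'M_m => A k k) BB0; rewrite !mxE => <-.
by apply: eq_bigr => l _; rewrite !mxE.
Qed.

End DotProduct.

Section RowSpaceOrthogonality.
Variables (R : realType) (m d : nat) (M : 'M[R]_(m, d)).

Lemma submxB (u v : 'rV[R]_d) : (u <= M)%MS -> (v <= M)%MS -> (u - v <= M)%MS.
Proof. by move=> uM vM; rewrite addmx_sub // -scaleN1r scalemx_sub. Qed.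

Lemma orth_dotp_sub (w u : 'rV[R]_d) : w *m M^T = 0 -> (u <= M)%MS -> dotp w u = 0.
Proof.
by move=> wM0 /submxP [x ->]; apply/eqP; rewrite -mulmx_tr_eq0_dotp trmx_mul mulmxA wM0 mul0mx.
Qed.

Lemma orth_sub_eq0 (w : 'rV[R]_d) : w *m M^T = 0 -> (w <= M)%MS -> w = 0.
Proof. by move=> wM0 wM; apply: dotp_self_eq0; apply: orth_dotp_sub. Qed.

(* The Gram matrix [M M^T] has the same row space as [M^T], which is exactly
   the solvability of the normal equations [x M M^T = p M^T]. *)
Lemma row_orth_decomp (p : 'rV[R]_d) :
  exists2 u, (u <= M)%MS & (p - u) *m M^T = 0.
Proof.
set G := M *m M^T.
have kerGM : (kermx G <= kermx M)%MS.
  rewrite sub_kermx; apply/eqP/mulmx_trmx_eq0.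
  by rewrite trmx_mul mulmxA -(mulmxA _ M) -/G (sub_kermxP (submx_refl _)) mul0mx.
have MG : (M^T <= G)%MS.
  have [leGM <-] := mxrank_leqif_sup (submxMl M (M^T) : (G <= M^T)%MS).
  move: leGM (mxrankS kerGM); rewrite !mxrank_ker mxrank_tr.
  by have := rank_leq_row G; have := rank_leq_row M; lia.
have /submxP [x px] : (p *m M^T <= G)%MS := submx_trans (submxMl _ _) MG.
by exists (x *m M); [exact: submxMl | rewrite mulmxBl px -mulmxA subrr].
Qed.

End RowSpaceOrthogonality.

Section AffineSubspace.
Variables (R : realType) (m d : nat) (M : 'M[R]_(m, d)).
Variables (P0 : 'rV[R]_d) (s : set 'rV[R]_d).
Hypothesis sE : forall Y, s Y <-> (Y - P0) *m M^T = 0.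

Lemma affine_base : s P0.
Proof. by apply/sE; rewrite subrr mul0mx. Qed.

Lemma affine_sub_orth Y Z : s Y -> s Z -> (Y - Z) *m M^T = 0.
Proof.
move=> /sE sY /sE sZ.
by rewrite -(subrBB Y Z P0) mulmxBl sY sZ subrr.
Qed.

Lemma affine_addr Y w : s Y -> w *m M^T = 0 -> s (Y + w).
Proof. by move=> /sE sY w0; apply/sE; rewrite addrAC mulmxDl sY w0 addr0. Qed.

Lemma is_projE P X : is_proj s P X <-> s X /\ (P - X <= M)%MS.
Proof.
split=> [[sX PX_orth] | [sX PXM]]; last first.
  by split=> // Y Z sY sZ; rewrite dotpC; apply: orth_dotp_sub (affine_sub_orth sY sZ) PXM.
have [u uM w0] := row_orth_decomp M (P - X).
have sXw := affine_addr sX w0.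
have Xw_orth : dotp (P - X) (P - X - u) = 0.
  by have := PX_orth _ _ sXw sX; rewrite addrAC subrr add0r.
have /dotp_self_eq0/eqP : dotp (P - X - u) (P - X - u) = 0.
  by rewrite dotpBl Xw_orth dotpC (orth_dotp_sub w0 uM) subrr.
by rewrite subr_eq0 => /eqP ->.
Qed.

Lemma is_proj_uniq P X1 X2 : is_proj s P X1 -> is_proj s P X2 -> X1 = X2.
Proof.
move=> /is_projE [sX1 PX1] /is_projE [sX2 PX2]; apply/eqP; rewrite -subr_eq0; apply/eqP.
apply: (orth_sub_eq0 (affine_sub_orth sX1 sX2)).
have -> : X1 - X2 = (P - X2) - (P - X1) by rewrite [RHS]addrC opprB subrKA.
exact: submxB.
Qed.

Lemma is_proj_proj P : is_proj s P (proj s P).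
Proof.
apply: epsilon_spec; have [u uM w0] := row_orth_decomp M (P - P0).
exists (P0 + (P - P0 - u)); apply/is_projE; split; first exact: affine_addr affine_base w0.
by rewrite opprD addrA subKr.
Qed.

Lemma proj_eq P P' : proj s P = proj s P' <-> (P - P' <= M)%MS.
Proof.
have /is_projE [_ PX] := is_proj_proj P; have /is_projE [_ PX'] := is_proj_proj P'.
split=> [XX' | PP'M].
  by rewrite -(subrBB P P' (proj s P)) submxB // XX'.
apply: is_proj_uniq (is_proj_proj P) _; apply/is_projE; split; first by case: (is_proj_proj P').
have -> : P - proj s P' = (P - P') + (P' - proj s P') by rewrite subrKA.
exact: addmx_sub.
Qed.

Lemma affine_point : row_full M -> is_point s.
Proof.
move=> Mfull; exists P0; apply: funext => Y; apply: propext.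
split=> [/sE YP0 | ->]; last exact: affine_base.
by apply/eqP; rewrite -subr_eq0; apply/eqP/(orth_sub_eq0 YP0)/submx_full.
Qed.

End AffineSubspace.

Section ComponentCount.
Variable T : finType.

(* [root r'] maps the [r]-roots onto the [r']-roots, and identifies the roots of
   the [r]-components of [i] and [j]. *)
Lemma n_comp_subrel_lt (r r' : rel T) i j :
  symmetric r -> symmetric r' -> subrel r r' -> r' i j -> ~~ connect r i j ->
  (n_comp r' T < n_comp r T)%N.
Proof.
move=> r_sym r'_sym rr' r'ij nij.
have c_sym := sym_connect_sym r_sym; have c'_sym := sym_connect_sym r'_sym.
have cc' : subrel (connect r) (connect r').
  by apply: connect_sub => x y /rr'; apply: connect1.
have root_root' x : fingraph.root r' (fingraph.root r x) = fingraph.root r' x.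
  by apply/esym/(fingraph.rootP c'_sym)/cc'/connect_root.
set A := [set x | roots r x].
have -> : n_comp r T = #|A| by apply: eq_card => x; rewrite !inE andbT.
have /leq_ltn_trans -> // : (n_comp r' T <= #|fingraph.root r' @: A|)%N.
  apply: subset_leq_card; apply/fintype.subsetP => x; rewrite !inE andbT => /eqP rx.
  apply/imsetP; exists (fingraph.root r x); first by rewrite inE roots_root.
  by rewrite root_root' rx.
rewrite ltn_neqAle leq_imset_card andbT; apply/imset_injP => root'_inj.
suff : fingraph.root r i = fingraph.root r j by move/eqP; rewrite root_connect // (negbTE nij).
apply: root'_inj; rewrite ?inE ?roots_root // !root_root'.
exact/(fingraph.rootP c'_sym)/connect1.
Qed.

End ComponentCount.

Section PairSpan.
Variables (R : realType) (n d : nat) (Q : 'I_n -> 'rV[R]_d).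
Implicit Types (r : rel 'I_n) (a b : 'I_n).

Definition edge_pairs r : {set 'I_n * 'I_n} :=
  [set p : 'I_n * 'I_n | (p.1 < p.2)%N && r p.1 p.2].

Definition pair_span (T : {set 'I_n * 'I_n}) := (\sum_(p in T) <<Q p.1 - Q p.2>>)%MS.

Lemma edge_pairs_lt r p : p \in edge_pairs r -> (p.1 < p.2)%N.
Proof. by rewrite inE => /andP []. Qed.

Lemma ncomp_edge_pairs r : symmetric r -> irreflexive r ->
  ncomp (edge_pairs r) = n_comp r 'I_n.
Proof.
move=> r_sym r_irr; apply/eq_n_comp/eq_connect => a b; rewrite /pair_rel !inE /=.
case: (ltngtP a b) => [_ | _ | /val_inj ->] /=; rewrite ?orbF;
  [by [] | exact: r_sym | by rewrite r_irr].
Qed.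

Lemma sub_pair_span r a b : symmetric r -> r a b ->
  (Q a - Q b <= pair_span (edge_pairs r))%MS.
Proof.
move=> r_sym rab.
have genP p : p \in edge_pairs r -> (Q p.1 - Q p.2 <= pair_span (edge_pairs r))%MS.
  by move=> pr; apply: (sumsmx_sup p) => //; rewrite genmxE.
case: (ltngtP a b) => [ab | ba | /val_inj ->]; last by rewrite subrr sub0mx.
  by apply: (genP (a, b)); rewrite inE ab rab.
by rewrite -opprB -scaleN1r scalemx_sub // (genP (b, a)) // inE ba r_sym.
Qed.

Lemma pair_span_subP r m (M : 'M[R]_(m, d)) :
  (forall a b, r a b -> (Q a - Q b <= M)%MS) -> (pair_span (edge_pairs r) <= M)%MS.
Proof.
by move=> rM; apply/sumsmx_subP => p; rewrite inE genmxE => /andP [_ /rM].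
Qed.

Lemma connect_sub_pair_span r a b : symmetric r -> connect r a b ->
  (Q a - Q b <= pair_span (edge_pairs r))%MS.
Proof.
move=> r_sym /connectP [p + ->]; elim: p a => [|c p IHp] a /=.
  by rewrite subrr sub0mx.
case/andP=> rac /IHp cp.
have -> : Q a - Q (last c p) = (Q a - Q c) + (Q c - Q (last c p)) by rewrite subrKA.
by rewrite addmx_sub // sub_pair_span.
Qed.

Lemma orth_pair_span r (w : 'rV[R]_d) :
  (forall a b, r a b -> dotp w (Q a - Q b) = 0) ->
  w *m (pair_span (edge_pairs r))^T = 0.
Proof.
move=> w_orth; suff /sub_kermxP/(congr1 trmx) : (pair_span (edge_pairs r) <= kermx w^T)%MS.
  by rewrite trmx_mul trmxK trmx0.
apply: pair_span_subP => a b rab.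
by rewrite sub_kermx mulmx_tr_eq0_dotp dotpC w_orth.
Qed.

Lemma general_position_rank_full r i j :
  ideal_general_position Q -> symmetric r -> irreflexive r -> ~~ connect r i j ->
  (Q i - Q j <= pair_span (edge_pairs r))%MS -> \rank (pair_span (edge_pairs r)) = d.
Proof.
move=> [_ GP] r_sym r_irr nij Qij.
have ij : i != j by apply: contraNneq nij => ->; apply: connect0.
pose r' : rel 'I_n := fun a b => [|| r a b, (a == i) && (b == j) | (a == j) && (b == i)].
have r'_sym : symmetric r'.
  by move=> a b; rewrite /r' r_sym (andbC (a == i)) (andbC (a == j)) [_ || _ && _]orbC.
have r'_irr : irreflexive r'.
  move=> a; rewrite /r' r_irr /=; apply/negbTE/norP.
  by split; apply: contraNN ij => /andP [/eqP <- /eqP <-].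
have rr' : subrel r r' by move=> a b rab; rewrite /r' rab.
have rank_eq : \rank (pair_span (edge_pairs r')) = \rank (pair_span (edge_pairs r)).
  apply/eqP; rewrite eqn_leq !mxrankS //; apply: pair_span_subP => a b.
    by move/rr'; apply: sub_pair_span.
  case/or3P=> [/(sub_pair_span r_sym) // | /andP [/eqP -> /eqP ->] // |].
  by case/andP=> /eqP -> /eqP ->; rewrite -opprB -scaleN1r scalemx_sub.
have r'ij : r' i j by rewrite /r' !eqxx orbT.
have comp_lt : (n_comp r' 'I_n < n_comp r 'I_n)%N.
  exact: n_comp_subrel_lt r_sym r'_sym rr' r'ij nij.
have comp_le : (n_comp r 'I_n <= n)%N by rewrite -[X in (_ <= X)%N]card_ord max_card.
have := GP _ (@edge_pairs_lt r'); have := GP _ (@edge_pairs_lt r).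
rewrite /ideal_span_dim -!/(pair_span _) !ncomp_edge_pairs // rank_eq.
move=> /addIr/eqP + /addIr/eqP; rewrite !eqz_nat => /eqP rank_r /eqP rank_r'.
lia.
Qed.

End PairSpan.

Section GainGraphFlat.
Variables (R : realType) (n d : nat) (E : finType) (src tgt : E -> 'I_n).
Variables (gain : E -> R) (Q : 'I_n -> 'rV[R]_d).
Local Notation hyp := (hyp src tgt gain Q).
Local Notation Es := (Es src tgt gain Q).

Lemma edge_rel_sym (F : {set E}) : symmetric (edge_rel src tgt F).
Proof. by move=> a b; apply: eq_existsb => e; rewrite orbC. Qed.

Lemma edge_rel_irr (F : {set E}) :
  (forall e, src e != tgt e) -> irreflexive (edge_rel src tgt F).
Proof.
move=> src_tgt a; apply/existsP => -[e /andP [_]]; rewrite orbb.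
by case/andP=> /eqP src_a /eqP tgt_a; move: (src_tgt e); rewrite src_a tgt_a eqxx.
Qed.

Lemma psi_sub a b P P' : psi Q a b P - psi Q a b P' = -2 * dotp (P - P') (Q a - Q b).
Proof. by rewrite /psi /dist2 !(dotpBl, dotpBr) !(dotpC P) !(dotpC P') (dotpC (Q b)); ring. Qed.

Lemma hyp_sub e Y Z : hyp e Z ->
  hyp e Y <-> dotp (Y - Z) (Q (src e) - Q (tgt e)) = 0.
Proof.
rewrite /Defs.hyp => <-; split=> [hY | YZ_orth]; last first.
  by apply/eqP; rewrite -subr_eq0 psi_sub YZ_orth mulr0.
have /eqP := psi_sub (src e) (tgt e) Y Z.
by rewrite hY subrr eq_sym mulf_eq0 oppr_eq0 pnatr_eq0 => /eqP.
Qed.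

Lemma Es_orth (s : set 'rV[R]_d) Y Z a b : s Y -> s Z ->
  edge_rel src tgt (Es s) a b -> dotp (Y - Z) (Q a - Q b) = 0.
Proof.
move=> sY sZ /existsP [e /andP [+ ab]]; rewrite inE => /asboolP s_e.
have YZ_orth := (hyp_sub Y (s_e Z sZ)).1 (s_e Y sY).
by case/orP: ab => /andP [/eqP <- /eqP <-] //; rewrite -[Q (tgt e) - _]opprB dotpNr YZ_orth oppr0.
Qed.

Lemma flat_orthE (S : {set E}) (s : set 'rV[R]_d) P0 :
  s = (fun P => forall e, e \in S -> hyp e P) -> s P0 ->
  forall Y, s Y <-> (Y - P0) *m (pair_span Q (edge_pairs (edge_rel src tgt (Es s))))^T = 0.
Proof.
move=> sS sP0 Y; split=> [sY | YP0_orth].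
  by apply: orth_pair_span => a b; apply: Es_orth.
have S_hyp e : e \in S -> forall P, s P -> hyp e P by move=> eS P; rewrite sS; apply.
rewrite sS => e eS; apply/(hyp_sub Y (S_hyp e eS P0 sP0)).
apply: orth_dotp_sub YP0_orth _; apply: sub_pair_span; first exact: edge_rel_sym.
apply/existsP; exists e; rewrite !eqxx /= andbT inE; apply/asboolP.
exact: S_hyp e eS.
Qed.

End GainGraphFlat.

Theorem corollary6p16 (R : realType) (n d : nat) (E : finType)
  (src tgt : E -> 'I_n) (gain : E -> R) (Q : 'I_n -> 'rV[R]_d) :
  (forall e, src e != tgt e) ->
  ideal_general_position Q ->
  forall s : set 'rV[R]_d,
    is_flat src tgt gain Q s -> ~ is_point s ->
    forall i j : 'I_n,
      proj s (Q i) = proj s (Q j) <->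
      connect (edge_rel src tgt (Es src tgt gain Q s)) i j.
Proof.
move=> src_tgt Qgp s [[S sS] [P0 sP0]] s_not_point i j.
have sE := flat_orthE sS sP0.
rewrite (proj_eq sE); split; last exact/connect_sub_pair_span/edge_rel_sym.
move=> Qij; apply/negPn/negP => nij; apply/s_not_point/(affine_point sE).
rewrite /row_full (general_position_rank_full Qgp _ _ nij Qij) //.
  exact: edge_rel_sym.
exact: edge_rel_irr.
Qed.
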